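(* Let $T$ be a near-truss and let $I$ be a paragon in $T$ that is a maximal left ideal. Then the quotient near-truss $T/I$ has no ideals other than singleton sets and $T/I$ itself.
   Context: A heap is a set with a ternary operation $[-,-,-]$ satisfying $[a_1,a_2,[a_3,a_4,a_5]]=[[a_1,a_2,a_3],a_4,a_5]$ and $[a,a,b]=b=[b,a,a]$. A near-truss is a heap with an associative multiplication satisfying $a[b,c,d]=[ab,ac,ad]$. A normal sub-heap is a non-empty subset $S$ closed under $[-,-,-]$ with $[[a,e,s],a,e]\in S$ for all $a$ and $e,s\in S$; $a\sim_S b$ iff $[a,b,s]\in S$ for some (equivalently all) $s\in S$. A sub-heap $S$ is closed if $[ts',ts,s]\in S$ and $[s't,st,s]\in S$ for all $s,s'\in S$, $t$. A paragon is a non-empty normal sub-heap $P$ all of whose $\sim_P$-classes are closed; then $T/P$ is a near-truss with $\bar a\bar b=\overline{ab}$. A left ideal is a normal sub-heap $I$ with $ti\in I$ for all $t$, $i\in I$; an ideal additionally satisfies $it\in I$. A left ideal $I\neq T$ is maximal if it is not contained in any left ideal other than itself and $T$. *)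

From Stdlib Require Import ClassicalEpsilon.

Set Implicit Arguments.

Section NearTruss.
Variable T : Type.
Variable h : T -> T -> T -> T.
Variable mul : T -> T -> T.

Definition is_heap : Prop :=
  (forall a1 a2 a3 a4 a5, h a1 a2 (h a3 a4 a5) = h (h a1 a2 a3) a4 a5) /\
  (forall a b, h a a b = b) /\ (forall a b, h b a a = b).

Definition is_near_truss : Prop :=
  is_heap /\
  (forall a b c, mul a (mul b c) = mul (mul a b) c) /\
  (forall a b c d, mul a (h b c d) = h (mul a b) (mul a c) (mul a d)).

Definition heap_closed (S : T -> Prop) : Prop :=
  forall a b c, S a -> S b -> S c -> S (h a b c).

Definition is_subheap (S : T -> Prop) : Prop :=
  (exists s, S s) /\ heap_closed S.

Definition is_normal_subheap (S : T -> Prop) : Prop :=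
  is_subheap S /\
  (forall a e s, S e -> S s -> S (h (h a e s) a e)).

Definition heap_rel (S : T -> Prop) (a b : T) : Prop :=
  exists s, S s /\ S (h a b s).

Definition is_closed_subheap (S : T -> Prop) : Prop :=
  is_subheap S /\
  (forall s s' t, S s -> S s' ->
     S (h (mul t s') (mul t s) s) /\ S (h (mul s' t) (mul s t) s)).

Definition is_paragon (P : T -> Prop) : Prop :=
  is_normal_subheap P /\
  (forall a, is_closed_subheap (heap_rel P a)).

Definition is_left_ideal (I : T -> Prop) : Prop :=
  is_normal_subheap I /\ (forall t i, I i -> I (mul t i)).

Definition is_ideal (I : T -> Prop) : Prop :=
  is_left_ideal I /\ (forall t i, I i -> I (mul i t)).

Definition is_maximal_left_ideal (I : T -> Prop) : Prop :=
  is_left_ideal I /\ (exists t, ~ I t) /\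
  (forall J, is_left_ideal J -> (forall x, I x -> J x) ->
     (forall x, J x <-> I x) \/ (forall x, J x)).

End NearTruss.

Section Quotient.
Variable T : Type.
Variable h : T -> T -> T -> T.
Variable mul : T -> T -> T.
Variable P : T -> Prop.

Definition qclass (a : T) : T -> Prop := heap_rel h P a.

Definition quot : Type := { A : T -> Prop | exists a, A = qclass a }.

Definition qcl (a : T) : quot := exist _ (qclass a) (ex_intro _ a eq_refl).

Definition qrep (A : quot) : T := proj1_sig (constructive_indefinite_description _ (proj2_sig A)).

(* operations on representatives: [ā,b̄,c̄] = class of [a,b,c], ā b̄ = class of ab
   (well defined when P is a paragon) *)
Definition qheap (A B C : quot) : quot := qcl (h (qrep A) (qrep B) (qrep C)).
Definition qmul (A B : quot) : quot := qcl (mul (qrep A) (qrep B)).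

End Quotient.

Arguments qclass {T} h P a.
Arguments quot {T} h P.
Arguments qcl {T} h P a.
Arguments qrep {T} h P A.
Arguments qheap {T} h P A B C.
Arguments qmul {T} h mul P A B.

From Stdlib Require Import ClassicalEpsilon ProofIrrelevance FunctionalExtensionality PropExtensionality.

(* Pull a left ideal J of T/I back to the union K of the classes it contains and
   translate it by a point k of K, m |-> [m, e, k] with e in I.  Since K is a
   union of I-classes and I is a left ideal, the translate M is a left ideal of T
   containing I.  By maximality M = I, in which case J is the single class of k,
   or M = T, in which case J is everything. *)

Set Implicit Arguments.
Unset Strict Implicit.

Section Heap.
Variables (T : Type) (h : T -> T -> T -> T).
Hypothesis Hheap : is_heap h.

Lemma heap_assocl a b c d e : h (h a b c) d e = h a b (h c d e).
Proof. symmetry; apply (proj1 Hheap). Qed.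

Lemma heap_cancel_l a b : h a a b = b.
Proof. apply (proj2 Hheap). Qed.

Lemma heap_cancel_r a b : h b a a = b.
Proof. apply (proj2 Hheap). Qed.

Lemma heap_cancel_mid a b c x : h a b (h b c x) = h a c x.
Proof. rewrite (proj1 Hheap), heap_cancel_r; reflexivity. Qed.

Lemma heap_swap_mid a b c d e : h a (h b c d) e = h a d (h c b e).
Proof.
  assert (Hadc : h (h a d c) b (h b c d) = a).
  { rewrite (proj1 Hheap), heap_cancel_r, heap_assocl, heap_cancel_l, heap_cancel_r.
    reflexivity. }
  rewrite (proj1 Hheap).
  transitivity (h (h (h a d c) b (h b c d)) (h b c d) e).
  - rewrite Hadc; reflexivity.
  - rewrite heap_assocl, heap_cancel_l; reflexivity.
Qed.

Ltac heap_norm :=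
  repeat progress rewrite ?heap_assocl, ?heap_swap_mid, ?heap_cancel_l,
                          ?heap_cancel_r, ?heap_cancel_mid;
  reflexivity.

Definition heap_translate (e k : T) (K : T -> Prop) (m : T) : Prop := K (h m e k).

Lemma heap_translate_heap e k a b c :
  h (h a b c) e k = h (h a e k) (h b e k) (h c e k).
Proof. heap_norm. Qed.

Lemma heap_translate_normal e k a f s :
  h (h (h a f s) a f) e k = h (h (h a e k) (h f e k) (h s e k)) (h a e k) (h f e k).
Proof. heap_norm. Qed.

Lemma heap_translate_inv e k p : h (h p k e) e k = p.
Proof. heap_norm. Qed.

Lemma qcl_qrep (S : T -> Prop) q : qcl h S (qrep h S q) = q.
Proof.
  destruct q as [A HA]; unfold qrep; simpl.
  destruct (constructive_indefinite_description _ HA) as [a Ha]; simpl.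
  apply subset_eq_compat; symmetry; exact Ha.
Qed.

Section NormalSubheap.
Variable S : T -> Prop.
Hypothesis HS : is_normal_subheap h S.

Let S_closed : heap_closed h S := proj2 (proj1 HS).
Let S_normal := proj2 HS.

Lemma heap_rel_mem a b s : heap_rel h S a b -> S s -> S (h a b s).
Proof.
  intros [s0 [Ss0 Sab]] Ss.
  replace (h a b s) with (h (h a b s0) s0 s) by heap_norm.
  apply S_closed; assumption.
Qed.

Lemma heap_rel_of_mem x y : S x -> S y -> heap_rel h S x y.
Proof. intros Sx Sy; exists x; split; [assumption | apply S_closed; assumption]. Qed.

Lemma heap_rel_refl a : heap_rel h S a a.
Proof.
  destruct (proj1 (proj1 HS)) as [s Ss].
  exists s; rewrite heap_cancel_l; split; assumption.
Qed.

Lemma heap_rel_sym a b : heap_rel h S a b -> heap_rel h S b a.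
Proof.
  intros [s [Ss Sab]]; exists s; split; [assumption |].
  replace (h b a s) with (h s (h a b s) s) by heap_norm.
  apply S_closed; assumption.
Qed.

Lemma heap_rel_trans a b c :
  heap_rel h S a b -> heap_rel h S b c -> heap_rel h S a c.
Proof.
  intros Hab Hbc.
  destruct (proj1 (proj1 HS)) as [s Ss].
  exists s; split; [assumption |].
  replace (h a c s) with (h (h a b s) s (h b c s)) by heap_norm.
  apply S_closed; auto using heap_rel_mem.
Qed.

Lemma heap_rel_heap a a' b b' c c' :
  heap_rel h S a a' -> heap_rel h S b b' -> heap_rel h S c c' ->
  heap_rel h S (h a b c) (h a' b' c').
Proof.
  intros Ha Hb Hc.
  destruct (proj1 (proj1 HS)) as [s Ss].
  apply heap_rel_trans with (h a' b c); [| apply heap_rel_trans with (h a' b' c)];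
    exists s; split; try assumption.
  - replace (h (h a b c) (h a' b c) s) with (h a a' s) by heap_norm.
    apply heap_rel_mem; assumption.
  - replace (h (h a' b c) (h a' b' c) s)
      with (h (h (h a' b' s) s (h b' b s)) (h a' b' s) s) by heap_norm.
    apply S_normal; auto using heap_rel_mem, heap_rel_sym.
  - replace (h (h a' b' c) (h a' b' c') s)
      with (h (h (h a' b' s) s (h c c' s)) (h a' b' s) s) by heap_norm.
    apply S_normal; auto using heap_rel_mem.
Qed.

Lemma qcl_eq a b : heap_rel h S a b -> qcl h S a = qcl h S b.
Proof.
  intros Hab; apply subset_eq_compat.
  extensionality x; apply propositional_extensionality; unfold qclass.
  split; intros Hx; eauto using heap_rel_trans, heap_rel_sym.
Qed.

Lemma heap_rel_of_qcl_eq a b : qcl h S a = qcl h S b -> heap_rel h S a b.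
Proof.
  intros E; apply (f_equal (@proj1_sig _ _)) in E; simpl in E.
  unfold qclass in E; rewrite E; apply heap_rel_refl.
Qed.

Lemma heap_rel_qrep_qcl a : heap_rel h S (qrep h S (qcl h S a)) a.
Proof. apply heap_rel_of_qcl_eq; rewrite qcl_qrep; reflexivity. Qed.

Lemma qheap_qcl a b c :
  qheap h S (qcl h S a) (qcl h S b) (qcl h S c) = qcl h S (h a b c).
Proof. apply qcl_eq, heap_rel_heap; apply heap_rel_qrep_qcl. Qed.

End NormalSubheap.

Section NearTruss.
Variable mul : T -> T -> T.
Hypothesis Hdistr : forall a b c d, mul a (h b c d) = h (mul a b) (mul a c) (mul a d).

Section Paragon.
Variable P : T -> Prop.
Hypothesis HP : is_paragon h mul P.

Lemma heap_rel_mul a a' b b' :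
  heap_rel h P a a' -> heap_rel h P b b' -> heap_rel h P (mul a b) (mul a' b').
Proof.
  intros Ha Hb.
  pose proof (proj1 HP) as HPn.
  (* Closedness of the classes of a and b: they contain [a'b, ab, a] and
     [a'b', a'b, b] respectively. *)
  apply heap_rel_trans with (mul a' b); [assumption | |].
  - destruct (proj2 (proj2 HP a) a a' b (heap_rel_refl HPn a) Ha)
      as [_ [s [Ps Hs]]].
    exists s; split; [assumption |].
    replace (h (mul a b) (mul a' b) s) with (h a (h (mul a' b) (mul a b) a) s)
      by heap_norm.
    assumption.
  - destruct (proj2 (proj2 HP b) b b' a' (heap_rel_refl HPn b) Hb)
      as [[s [Ps Hs]] _].
    exists s; split; [assumption |].
    replace (h (mul a' b) (mul a' b') s) with (h b (h (mul a' b') (mul a' b) b) s)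
      by heap_norm.
    assumption.
Qed.

Lemma qmul_qcl a b : qmul h mul P (qcl h P a) (qcl h P b) = qcl h P (mul a b).
Proof.
  apply (qcl_eq (proj1 HP)), heap_rel_mul; apply (heap_rel_qrep_qcl (proj1 HP)).
Qed.

Definition qpreimage (J : quot h P -> Prop) (a : T) : Prop := J (qcl h P a).

Lemma left_ideal_qpreimage J :
  is_left_ideal (qheap h P) (qmul h mul P) J -> is_left_ideal h mul (qpreimage J).
Proof.
  intros [[[[q Jq] J_closed] J_normal] J_left]; unfold qpreimage.
  split; [split; [split |] |].
  - exists (qrep h P q); rewrite qcl_qrep; assumption.
  - intros a b c Ja Jb Jc; rewrite <- (qheap_qcl (proj1 HP)); auto.
  - intros a e s Je Js; rewrite <- !(qheap_qcl (proj1 HP)); auto.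
  - intros t i Ji; rewrite <- qmul_qcl; auto.
Qed.

Lemma qpreimage_saturated J a b :
  heap_rel h P a b -> qpreimage J a -> qpreimage J b.
Proof. unfold qpreimage; intros Hab; rewrite (qcl_eq (proj1 HP) Hab); trivial. Qed.

End Paragon.

Section Translate.
Variables (I K : T -> Prop) (e k : T).
Hypotheses (HI : is_left_ideal h mul I) (HK : is_left_ideal h mul K).
Hypothesis K_saturated : forall a b, heap_rel h I a b -> K a -> K b.
Hypotheses (Ie : I e) (Kk : K k).

Lemma left_ideal_heap_translate : is_left_ideal h mul (heap_translate e k K).
Proof.
  destruct HI as [HIn I_left].
  destruct HK as [[[_ K_closed] K_normal] K_left]; unfold heap_translate.
  split; [split; [split |] |].
  - exists e; rewrite heap_cancel_l; assumption.
  - intros a b c Ka Kb Kc; rewrite heap_translate_heap; auto.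
  - intros a f s Kf Ks; rewrite heap_translate_normal; auto.
  - intros t m Km.
    (* t [m, e, k] = [tm, te, tk], and te ~ e because both lie in I *)
    assert (Ktm : K (h (mul t m) e (mul t k))).
    { apply K_saturated with (mul t (h m e k)); [| auto].
      rewrite Hdistr.
      apply heap_rel_heap; auto using heap_rel_refl.
      apply heap_rel_of_mem; auto. }
    replace (h (mul t m) e k) with (h (h (mul t m) e (mul t k)) (mul t k) k)
      by heap_norm.
    auto.
Qed.

Lemma subset_heap_translate x : I x -> heap_translate e k K x.
Proof.
  intros Ix; unfold heap_translate.
  apply K_saturated with k; [| assumption].
  rewrite <- (heap_cancel_l e k) at 1.
  destruct HI as [HIn _].
  apply heap_rel_heap; [assumption | apply heap_rel_of_mem; assumption | |];
    apply heap_rel_refl; assumption.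
Qed.

End Translate.

Lemma quot_left_ideal_trivial (I : T -> Prop) :
  is_paragon h mul I -> is_maximal_left_ideal h mul I ->
  forall J : quot h I -> Prop,
    is_left_ideal (qheap h I) (qmul h mul I) J ->
    (exists q, forall x, J x <-> x = q) \/ (forall x, J x).
Proof.
  intros HP [HI [_ I_max]] J HJ.
  destruct (proj1 (proj1 (proj1 HJ))) as [q Jq].
  destruct (proj1 (proj1 (proj1 HI))) as [e Ie].
  set (k := qrep h I q).
  assert (Kk : qpreimage J k) by (unfold qpreimage, k; rewrite qcl_qrep; assumption).
  pose proof (@qpreimage_saturated I HP J) as K_saturated.
  pose proof (left_ideal_qpreimage HP HJ) as HK.
  destruct (I_max (heap_translate e k (qpreimage J))
              (left_ideal_heap_translate HI HK K_saturated Ie Kk)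
              (subset_heap_translate HI K_saturated Ie Kk)) as [M_eq_I | M_full].
  - left; exists q; split; intros Jx.
    + rewrite <- (qcl_qrep x), <- (qcl_qrep q).
      apply (qcl_eq (proj1 HP)).
      assert (I_pke : I (h (qrep h I x) k e)).
      { apply M_eq_I; unfold heap_translate, qpreimage.
        rewrite heap_translate_inv, qcl_qrep; assumption. }
      exists e; split; assumption.
    + subst x; assumption.
  - right; intros x.
    specialize (M_full (h (qrep h I x) k e)).
    unfold heap_translate, qpreimage in M_full.
    rewrite heap_translate_inv, qcl_qrep in M_full; assumption.
Qed.

End NearTruss.
End Heap.

Unset Implicit Arguments.

Theorem lemma3p23 (T : Type) (h : T -> T -> T -> T) (mul : T -> T -> T)
  (HT : is_near_truss h mul) (I : T -> Prop)
  (HP : is_paragon h mul I) (HI : is_maximal_left_ideal h mul I) :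
  forall J : quot h I -> Prop,
    is_ideal (qheap h I) (qmul h mul I) J ->
    (exists q, forall x, J x <-> x = q) \/ (forall x, J x).
Proof.
  destruct HT as [Hheap [_ Hdistr]].
  intros J HJ.
  exact (quot_left_ideal_trivial Hheap Hdistr HP HI (proj1 HJ)).
Qed.
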